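(* Let $H\in\mathbb{C}^{n\times n}$ be a Hermitian positive-definite matrix. Then $H$ is complex orthogonal, i.e. $H H^T = H^T H = \mathbb{I}_n$, if and only if there exists a complex orthogonal matrix $R\in\mathbb{C}^{n\times n}$ ($R R^T = R^T R = \mathbb{I}_n$) such that $H = R^\dagger R$.
   Context: $^T$ denotes transpose, $^\dagger$ conjugate transpose, $\mathbb{I}_n$ the $n\times n$ identity. *)

From HB Require Import structures.
From mathcomp Require Import all_boot all_order all_algebra.
From mathcomp Require Import reals.
From mathcomp Require Import complex.
Set Implicit Arguments. Unset Strict Implicit. Unset Printing Implicit Defensive.
Import Order.TTheory GRing.Theory Num.Theory.
Local Open Scope ring_scope.

Definition conjT (C : numClosedFieldType) (m n : nat) (A : 'M[C]_(m, n)) : 'M[C]_(n, m) :=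
  (map_mx Num.conj A)^T.

Definition hermitian (C : numClosedFieldType) (n : nat) (H : 'M[C]_n) : Prop :=
  conjT H = H.

Definition herm_posdef (C : numClosedFieldType) (n : nat) (H : 'M[C]_n) : Prop :=
  hermitian H /\
  forall v : 'cV[C]_n, v != 0 -> 0 < (conjT v *m H *m v) ord0 ord0.

Definition complex_orthogonal (C : numClosedFieldType) (n : nat) (A : 'M[C]_n) : Prop :=
  A *m A^T = 1%:M /\ A^T *m A = 1%:M.

From HB Require Import structures.
From mathcomp Require Import all_boot all_order all_algebra.
From mathcomp Require Import reals.
From mathcomp Require Import complex.
Import Order.TTheory GRing.Theory Num.Theory.
Local Open Scope ring_scope.
Local Open Scope complex_scope.

(* A Hermitian positive-definite H is unitarily diagonalised, H = P^* D P with D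
   positive. Writing U := P P^T, H is complex orthogonal iff D U D = U, and
   entrywise this says d_i d_j = 1 wherever U_ij <> 0; then also
   sqrt(d_i) sqrt(d_j) = 1 there, so the positive square root Q := P^* D^(1/2) P
   is again complex orthogonal, and H = Q^* Q. Conversely, if Q is complex
   orthogonal then (Q^* Q)(Q^* Q)^T = Q^* conj(Q^T Q) = 1. *)

Section ComplexOrthogonal.
Variable C : numClosedFieldType.
Implicit Types (m n : nat).

Lemma conjTE m n (A : 'M[C]_(m, n)) : conjT A = (A ^t Num.conj)%sesqui.
Proof. by apply/matrixP => i j; rewrite !mxE. Qed.

Lemma conjTM m n p (A : 'M[C]_(m, n)) (B : 'M[C]_(n, p)) :
  conjT (A *m B) = conjT B *m conjT A.
Proof. by rewrite /conjT map_mxM trmx_mul. Qed.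

Lemma conjTK m n (A : 'M[C]_(m, n)) : conjT (conjT A) = A.
Proof. by rewrite !conjTE trmxCK. Qed.

Lemma complex_orthogonalE n (A : 'M[C]_n) :
  complex_orthogonal A <-> A *m A^T = 1%:M.
Proof. by split=> [[]//|AAT]; split=> //; apply: mulmx1C. Qed.

Lemma complex_orthogonal_conjT_mul n (Q : 'M[C]_n) :
  complex_orthogonal Q -> complex_orthogonal (conjT Q *m Q).
Proof.
move=> [QQT QTQ]; apply/complex_orthogonalE.
rewrite trmx_mul /conjT trmxK mulmxA -(mulmxA _ Q) QQT mulmx1.
by rewrite map_trmx -map_mxM QTQ map_mx1.
Qed.

Lemma conjT_delta_col n (i : 'I_n) :
  conjT (delta_mx i 0 : 'cV[C]_n) = delta_mx 0 i.
Proof. by apply/matrixP => a b; rewrite !mxE rmorph_nat andbC. Qed.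

Lemma herm_posdef_spectral n (H : 'M[C]_n) : herm_posdef H ->
  exists2 P : 'M[C]_n, P *m conjT P = 1%:M &
  exists2 d : 'rV[C]_n, (forall i, 0 < d 0 i) & H = conjT P *m diag_mx d *m P.
Proof.
move=> [Hh Hpos]; set P := spectralmx H; set d := spectral_diag H.
have PU : P *m conjT P = 1%:M.
  by rewrite conjTE; apply/unitarymxP/spectral_unitarymx.
have HE : H = conjT P *m diag_mx d *m P.
  have /orthomx_spectralP -> : H \is normalmx by apply/normalmxP; rewrite -conjTE Hh.
  by rewrite invmx_unitary ?spectral_unitarymx // -conjTE.
exists P => //; exists d => // i.
pose v : 'cV[C]_n := conjT P *m delta_mx i 0.
have v_neq0 : v != 0.
  apply/negP => /eqP /(congr1 (mulmx P)).
  rewrite mulmxA PU mul1mx mulmx0 => /matrixP/(_ i 0).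
  by rewrite !mxE !eqxx => /eqP; rewrite oner_eq0.
have := Hpos _ v_neq0.
rewrite HE conjTM conjTK !mulmxA -(mulmxA _ P) PU mulmx1 -(mulmxA _ P) PU mulmx1.
by rewrite conjT_delta_col -rowE -colE !mxE eqxx mulr1n.
Qed.

Lemma unitary_conj_orthogonalE n (P D : 'M[C]_n) : P *m conjT P = 1%:M ->
  complex_orthogonal (conjT P *m D *m P) <-> D *m (P *m P^T) *m D^T = P *m P^T.
Proof.
move=> PU; have PTP : conjT P *m P = 1%:M := mulmx1C PU.
have PTcP : P^T *m (conjT P)^T = 1%:M by rewrite -trmx_mul PTP trmx1.
have cPPT : (conjT P)^T *m P^T = 1%:M := mulmx1C PTcP.
rewrite complex_orthogonalE !trmx_mul.
have -> : conjT P *m D *m P *m (P^T *m (D^T *m (conjT P)^T))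
    = conjT P *m (D *m (P *m P^T) *m D^T) *m (conjT P)^T by rewrite !mulmxA.
split=> [/(congr1 (fun X => P *m X *m P^T))|->].
  by rewrite !mulmxA PU mul1mx -!mulmxA cPPT mulmx1 mul1mx.
by rewrite !mulmxA PTP mul1mx PTcP.
Qed.

Lemma sqrtC_sandwich (a b u : C) : 0 <= a -> 0 <= b ->
  a * u * b = u -> sqrtC a * u * sqrtC b = u.
Proof.
move=> a_ge0 b_ge0; have [-> | u_neq0] := eqVneq u 0.
  by rewrite !mulr0 !mul0r.
rewrite mulrAC => abu; have ab1 : a * b = 1 by apply: (mulIf u_neq0); rewrite mul1r.
by rewrite mulrAC -sqrtCM ?nnegrE // ab1 sqrtC1 mul1r.
Qed.

Lemma diag_sqrt_sandwich n (d : 'rV[C]_n) (U : 'M[C]_n) :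
  (forall i, 0 <= d 0 i) -> diag_mx d *m U *m diag_mx d = U ->
  diag_mx (map_mx sqrtC d) *m U *m diag_mx (map_mx sqrtC d) = U.
Proof.
move=> d_ge0 /matrixP dUd; apply/matrixP => i j; move: (dUd i j).
rewrite !mul_mx_diag !mul_diag_mx !mxE; exact: sqrtC_sandwich.
Qed.

Lemma herm_posdef_orthogonal_factor n (H : 'M[C]_n) :
  herm_posdef H -> complex_orthogonal H ->
  exists Q : 'M[C]_n, complex_orthogonal Q /\ H = conjT Q *m Q.
Proof.
move=> /herm_posdef_spectral [P PU [d d_gt0 ->]].
rewrite (unitary_conj_orthogonalE _ _ _ PU) tr_diag_mx => dUd.
pose e := map_mx sqrtC d.
have ee : diag_mx e *m diag_mx e = diag_mx d.
  by rewrite mulmx_diag; congr diag_mx; apply/rowP => j; rewrite !mxE -expr2 sqrtCK.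
have e_herm : conjT (diag_mx e) = diag_mx e.
  rewrite /conjT map_diag_mx tr_diag_mx; congr diag_mx; apply/rowP => j.
  by rewrite !mxE; apply/conj_Creal/ger0_real; rewrite sqrtC_ge0 ltW.
exists (conjT P *m diag_mx e *m P); split.
  rewrite (unitary_conj_orthogonalE _ _ _ PU) tr_diag_mx.
  by apply: diag_sqrt_sandwich => // i; apply: ltW.
rewrite !conjTM conjTK e_herm !mulmxA -(mulmxA _ P) PU mulmx1.
by rewrite -ee !mulmxA.
Qed.

End ComplexOrthogonal.

Theorem theorem1 (R : realType) (n : nat) (H : 'M[R[i]]_n) :
  herm_posdef H ->
  (complex_orthogonal H <->
   exists Q : 'M[R[i]]_n, complex_orthogonal Q /\ H = conjT Q *m Q).
Proof.
move=> Hpd; split; first exact: herm_posdef_orthogonal_factor.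
by move=> [Q [QO ->]]; apply: complex_orthogonal_conjT_mul.
Qed.
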